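(* Let $\mathsf r:\phi\to\psi$ be a non-trivial linear inference among a nonempty set of variables $\mathcal{V}\neq\emptyset$ (the variables occurring in $\mathsf r$). Then there is a constant-free, negation-free, non-trivial linear inference $\mathsf r':\phi'\to\psi'$ with $\phi',\psi'$ linear formulae on $\mathcal{V}$, such that $\mathsf r$ is $\{\mathsf{s},\mathsf{m},\mathsf r'\}$-derivable with units.
   Context: Fix a countably infinite set of variables. Linear formulae on a finite set $\mathcal{V}$ of variables are defined inductively: - $\top,\bot$ are linear formulae on $\emptyset$. - $x$ and $\neg x$ are linear formulae on $\{x\}$. - If $\phi$ is on $\mathcal{V}_1$, $\psi$ is on $\mathcal{V}_2$ and $\mathcal{V}_1\cap\mathcal{V}_2=\emptyset$, then $\phi\lor\psi$ and $\phi\land\psi$ are on $\mathcal{V}_1\cup\mathcal{V}_2$. A formula is constant-free if it contains no $\top,\bot$, and negation-free if it contains no $\neg x$. Formulae are evaluated under Boolean assignments. A linear inference $\phi\to\psi$ is a pair of linear formulae such that every assignment satisfying $\phi$ satisfies $\psi$. An inference $\phi\to\psi$ is trivial at a variable $x$ if $\phi[\top/x]\to\psi[\bot/x]$ is valid; it is trivial if trivial at some variable, non-trivial otherwise. A congruence is an equivalence relation closed under $\land$- and $\lor$-contexts. - $\sim_{\mathsf{ac}}$ is the smallest congruence containing commutativity and associativity of $\land,\lor$. - $\sim_{\mathsf{u}}$ is the smallest congruence containing $\phi\land\top\sim\phi$, $\top\land\phi\sim\phi$, $\phi\lor\bot\sim\phi$, $\bot\lor\phi\sim\phi$, $\phi\land\bot\sim\bot$,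 $\bot\land\phi\sim\bot$, $\phi\lor\top\sim\top$, $\top\lor\phi\sim\top$. - $\sim_{\mathsf{acu}}$ is the smallest congruence containing both. For a set $S$ of linear inferences, $\to_S$ is the smallest relation containing $S$ and closed under substitution (of linear formulae for variables, keeping linearity) and contexts. $\phi\rightsquigarrow_{S\mathsf u}\psi$ means $\phi\sim_{\mathsf{acu}}\phi'\to_S\psi'\sim_{\mathsf{acu}}\psi$ for some $\phi',\psi'$. The inference $\phi\to\psi$ is $S$-derivable with units if $\phi,\psi$ are related by the reflexive-transitive closure of $\rightsquigarrow_{S\mathsf u}\cup\sim_{\mathsf{acu}}$. Switch $\mathsf{s}$ is $x\land(y\lor z)\to(x\land y)\lor z$; medial $\mathsf{m}$ is $(w\land x)\lor(y\land z)\to(w\lor y)\land(x\lor z)$. *)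

From Stdlib Require Import List Arith Relations.
Import ListNotations.

Inductive form : Type :=
| Top : form
| Bot : form
| Var : nat -> form
| NVar : nat -> form
| And : form -> form -> form
| Or : form -> form -> form.

Fixpoint vars (f : form) : list nat :=
  match f with
  | Top | Bot => []
  | Var x | NVar x => [x]
  | And a b | Or a b => vars a ++ vars b
  end.

(* linear: every variable occurs at most once (this is exactly the
   inductive definition: disjoint variable sets at each binary node) *)
Definition linear (f : form) : Prop := NoDup (vars f).

Definition on_vars (f : form) (V : list nat) : Prop :=
  forall x, In x (vars f) <-> In x V.

Fixpoint constant_free (f : form) : Prop :=
  match f with
  | Top | Bot => False
  | Var _ | NVar _ => True
  | And a b | Or a b => constant_free a /\ constant_free b
  end.

Fixpoint negation_free (f : form) : Prop :=
  match f with
  | NVar _ => False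
  | Top | Bot | Var _ => True
  | And a b | Or a b => negation_free a /\ negation_free b
  end.

Fixpoint eval (a : nat -> bool) (f : form) : bool :=
  match f with
  | Top => true
  | Bot => false
  | Var x => a x
  | NVar x => negb (a x)
  | And p q => andb (eval a p) (eval a q)
  | Or p q => orb (eval a p) (eval a q)
  end.

Fixpoint neg (f : form) : form :=
  match f with
  | Top => Bot
  | Bot => Top
  | Var x => NVar x
  | NVar x => Var x
  | And p q => Or (neg p) (neg q)
  | Or p q => And (neg p) (neg q)
  end.

Fixpoint subst (sigma : nat -> form) (f : form) : form :=
  match f with
  | Top => Top
  | Bot => Bot
  | Var x => sigma x
  | NVar x => neg (sigma x)
  | And p q => And (subst sigma p) (subst sigma q)
  | Or p q => Or (subst sigma p) (subst sigma q)
  end.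

Definition subst1 (x : nat) (t : form) (f : form) : form :=
  subst (fun y => if Nat.eqb y x then t else Var y) f.

Definition valid (phi psi : form) : Prop :=
  forall a : nat -> bool, eval a phi = true -> eval a psi = true.

Definition linear_inference (phi psi : form) : Prop :=
  linear phi /\ linear psi /\ valid phi psi.

Definition inf_vars (phi psi : form) : list nat := vars phi ++ vars psi.

Definition trivial_at (x : nat) (phi psi : form) : Prop :=
  valid (subst1 x Top phi) (subst1 x Bot psi).

Definition nontrivial (phi psi : form) : Prop :=
  forall x, In x (inf_vars phi psi) -> ~ trivial_at x phi psi.

Inductive acu : form -> form -> Prop :=
| acu_refl p : acu p p
| acu_sym p q : acu p q -> acu q p
| acu_trans p q r : acu p q -> acu q r -> acu p r
| acu_and p p' q q' : acu p p' -> acu q q' -> acu (And p q) (And p' q')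
| acu_or p p' q q' : acu p p' -> acu q q' -> acu (Or p q) (Or p' q')
| acu_and_comm p q : acu (And p q) (And q p)
| acu_or_comm p q : acu (Or p q) (Or q p)
| acu_and_assoc p q r : acu (And p (And q r)) (And (And p q) r)
| acu_or_assoc p q r : acu (Or p (Or q r)) (Or (Or p q) r)
| acu_and_top_r p : acu (And p Top) p
| acu_and_top_l p : acu (And Top p) p
| acu_or_bot_r p : acu (Or p Bot) p
| acu_or_bot_l p : acu (Or Bot p) p
| acu_and_bot_r p : acu (And p Bot) Bot
| acu_and_bot_l p : acu (And Bot p) Bot
| acu_or_top_r p : acu (Or p Top) Top
| acu_or_top_l p : acu (Or Top p) Top.

Inductive rewr (S : form -> form -> Prop) : form -> form -> Prop :=
| rewr_inst phi psi (sigma : nat -> form) :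
    S phi psi -> linear (subst sigma phi) -> linear (subst sigma psi) ->
    rewr S (subst sigma phi) (subst sigma psi)
| rewr_and_l p p' c :
    rewr S p p' -> linear (And p c) -> linear (And p' c) ->
    rewr S (And p c) (And p' c)
| rewr_and_r p p' c :
    rewr S p p' -> linear (And c p) -> linear (And c p') ->
    rewr S (And c p) (And c p')
| rewr_or_l p p' c :
    rewr S p p' -> linear (Or p c) -> linear (Or p' c) ->
    rewr S (Or p c) (Or p' c)
| rewr_or_r p p' c :
    rewr S p p' -> linear (Or c p) -> linear (Or c p') ->
    rewr S (Or c p) (Or c p').

Definition rewr_u (S : form -> form -> Prop) (phi psi : form) : Prop :=
  exists phi' psi', acu phi phi' /\ rewr S phi' psi' /\ acu psi' psi.

Definition derivable_u (S : form -> form -> Prop) (phi psi : form) : Prop :=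
  clos_refl_trans form (fun a b => rewr_u S a b \/ acu a b) phi psi.

Definition switch_l : form := And (Var 0) (Or (Var 1) (Var 2)).
Definition switch_r : form := Or (And (Var 0) (Var 1)) (Var 2).
Definition medial_l : form := Or (And (Var 0) (Var 1)) (And (Var 2) (Var 3)).
Definition medial_r : form := And (Or (Var 0) (Var 2)) (Or (Var 1) (Var 3)).

Definition smr (phi' psi' : form) (p q : form) : Prop :=
  (p = switch_l /\ q = switch_r) \/
  (p = medial_l /\ q = medial_r) \/
  (p = phi' /\ q = psi').

(** The unit laws rewrite [phi] and [psi], modulo [~acu], to normal forms that are
    either constants or constant-free.  Non-triviality forces every variable of the
    inference to occur positively in both normal forms: a formula with no positive
    occurrence of [x] is antitone in [x], and antitonicity of the premise (or of the
    conclusion) in [x] makes the inference trivial at [x].  By linearity there is then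
    no room for negative occurrences, and since some variable occurs, neither normal
    form is a constant.  So [r' := nf phi -> nf psi] is constant-free, negation-free
    and non-trivial, and [r] is a single instance of [r'] up to [~acu]. *)

From Stdlib Require Import List Arith Bool Relations.
Import ListNotations.

Lemma NoDup_app_disjoint {A : Type} (l l' : list A) x :
  NoDup (l ++ l') -> In x l -> In x l' -> False.
Proof.
  intros Hnd Hl Hl'. apply in_split in Hl' as (l1 & l2 & ->).
  rewrite app_assoc in Hnd. apply NoDup_remove_2 in Hnd.
  apply Hnd, in_or_app. left. apply in_or_app. now left.
Qed.

Lemma NoDup_app_incl {A : Type} (l1 l2 m1 m2 : list A) :
  NoDup (l1 ++ l2) -> NoDup m1 -> NoDup m2 -> incl m1 l1 -> incl m2 l2 ->
  NoDup (m1 ++ m2).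
Proof.
  intros Hnd H1 H2 I1 I2. apply NoDup_app; [exact H1 | exact H2 |].
  intros x X Y. exact (NoDup_app_disjoint l1 l2 x Hnd (I1 x X) (I2 x Y)).
Qed.

Lemma incl_app_cancel_l {A : Type} (l1 l2 m1 m2 : list A) :
  NoDup (l1 ++ l2) -> incl m2 l2 -> incl (l1 ++ l2) (m1 ++ m2) -> incl l1 m1.
Proof.
  intros Hnd I2 I x X.
  destruct (in_app_or _ _ _ (I x (in_or_app _ _ _ (or_introl X)))) as [Y | Y].
  - exact Y.
  - exfalso. exact (NoDup_app_disjoint l1 l2 x Hnd X (I2 x Y)).
Qed.

Lemma incl_app_cancel_r {A : Type} (l1 l2 m1 m2 : list A) :
  NoDup (l1 ++ l2) -> incl m1 l1 -> incl (l1 ++ l2) (m1 ++ m2) -> incl l2 m2.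
Proof.
  intros Hnd I1 I x X.
  destruct (in_app_or _ _ _ (I x (in_or_app _ _ _ (or_intror X)))) as [Y | Y].
  - exfalso. exact (NoDup_app_disjoint l1 l2 x Hnd (I1 x Y) X).
  - exact Y.
Qed.

Lemma linear_app_inv (a b : form) :
  NoDup (vars a ++ vars b) -> linear a /\ linear b.
Proof.
  intros L. split; [exact (NoDup_app_remove_r _ _ L) | exact (NoDup_app_remove_l _ _ L)].
Qed.

Definition upd (a : nat -> bool) (x : nat) (c : bool) : nat -> bool :=
  fun y => if Nat.eqb y x then c else a y.

Lemma eval_neg a f : eval a (neg f) = negb (eval a f).
Proof.
  induction f; simpl; rewrite ?IHf1, ?IHf2; try reflexivity.
  - now rewrite negb_involutive.
  - now rewrite negb_andb.
  - now rewrite negb_orb.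
Qed.

Lemma eval_subst a sigma f : eval a (subst sigma f) = eval (fun y => eval a (sigma y)) f.
Proof. induction f; simpl; rewrite ?IHf1, ?IHf2, ?eval_neg; reflexivity. Qed.

Lemma eval_subst1 a x t f : eval a (subst1 x t f) = eval (upd a x (eval a t)) f.
Proof.
  unfold subst1. rewrite eval_subst. induction f; simpl; rewrite ?IHf1, ?IHf2; try reflexivity;
  unfold upd; destruct (Nat.eqb n x); reflexivity.
Qed.

Lemma subst_Var f : subst Var f = f.
Proof. induction f; simpl; rewrite ?IHf1, ?IHf2; reflexivity. Qed.

Lemma trivial_atE x phi psi :
  trivial_at x phi psi <->
  (forall a, eval (upd a x true) phi = true -> eval (upd a x false) psi = true).
Proof.
  unfold trivial_at, valid.
  split; intros H a; specialize (H a); rewrite !eval_subst1 in *; exact H.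
Qed.

Lemma trivial_at_eval_ext x phi psi phi' psi' :
  (forall a, eval a phi' = eval a phi) -> (forall a, eval a psi' = eval a psi) ->
  trivial_at x phi' psi' -> trivial_at x phi psi.
Proof.
  intros E1 E2. rewrite !trivial_atE. intros H a. rewrite <- E1, <- E2. apply H.
Qed.

Definition antitone_in (x : nat) (f : form) : Prop :=
  forall a, eval (upd a x true) f = true -> eval (upd a x false) f = true.

Fixpoint pvars (f : form) : list nat :=
  match f with
  | Var x => [x]
  | Top | Bot | NVar _ => []
  | And a b | Or a b => pvars a ++ pvars b
  end.

Lemma pvars_incl_vars f : incl (pvars f) (vars f).
Proof.
  induction f; simpl; try apply incl_refl; try apply incl_nil_l.
  all: apply incl_app_app; assumption.
Qed.

Lemma antitone_in_notin_pvars x f : ~ In x (pvars f) -> antitone_in x f.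
Proof.
  unfold antitone_in. induction f; simpl; rewrite ?in_app_iff; intros N a; auto.
  - unfold upd. destruct (Nat.eqb_spec n x); [subst; tauto | auto].
  - unfold upd. destruct (Nat.eqb n x); simpl; auto.
  - rewrite !andb_true_iff. intuition.
  - rewrite !orb_true_iff. intuition.
Qed.

Lemma trivial_at_antitone_l x phi psi :
  valid phi psi -> antitone_in x phi -> trivial_at x phi psi.
Proof. intros V A. apply trivial_atE. intros a H. apply V, A, H. Qed.

Lemma trivial_at_antitone_r x phi psi :
  valid phi psi -> antitone_in x psi -> trivial_at x phi psi.
Proof. intros V A. apply trivial_atE. intros a H. apply A, V, H. Qed.

Lemma nontrivial_in_pvars_l phi psi f x :
  valid phi psi -> nontrivial phi psi -> (forall a, eval a f = eval a phi) ->
  In x (inf_vars phi psi) -> In x (pvars f).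
Proof.
  intros V NT E Hx. destruct (in_dec Nat.eq_dec x (pvars f)) as [P | N]; [exact P |].
  exfalso. apply (NT x Hx), trivial_at_antitone_l; [exact V |].
  intros a. rewrite <- !E. apply antitone_in_notin_pvars, N.
Qed.

Lemma nontrivial_in_pvars_r phi psi f x :
  valid phi psi -> nontrivial phi psi -> (forall a, eval a f = eval a psi) ->
  In x (inf_vars phi psi) -> In x (pvars f).
Proof.
  intros V NT E Hx. destruct (in_dec Nat.eq_dec x (pvars f)) as [P | N]; [exact P |].
  exfalso. apply (NT x Hx), trivial_at_antitone_r; [exact V |].
  intros a. rewrite <- !E. apply antitone_in_notin_pvars, N.
Qed.

Lemma negation_free_of_incl_pvars f : linear f -> incl (vars f) (pvars f) -> negation_free f.
Proof.
  unfold linear. induction f; simpl; intros L I; auto.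
  1: exact (I n (or_introl eq_refl)).
  all: destruct (linear_app_inv _ _ L) as [L1 L2]; split;
    [ apply IHf1; [exact L1 | exact (incl_app_cancel_l _ _ _ _ L (pvars_incl_vars f2) I)]
    | apply IHf2; [exact L2 | exact (incl_app_cancel_r _ _ _ _ L (pvars_incl_vars f1) I)] ].
Qed.

Lemma acu_eval p q : acu p q -> forall a, eval a p = eval a q.
Proof.
  induction 1; intro a; simpl;
    try (rewrite IHacu1, IHacu2; reflexivity); try (rewrite IHacu; reflexivity);
    repeat match goal with |- context [eval ?b ?f] => destruct (eval b f) end;
    reflexivity.
Qed.

Definition mkAnd (p q : form) : form :=
  match p, q with
  | Top, _ => q | Bot, _ => Bot | _, Top => p | _, Bot => Bot | _, _ => And p q
  end.

Definition mkOr (p q : form) : form :=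
  match p, q with
  | Bot, _ => q | Top, _ => Top | _, Bot => p | _, Top => Top | _, _ => Or p q
  end.

Fixpoint nf (f : form) : form :=
  match f with
  | And a b => mkAnd (nf a) (nf b)
  | Or a b => mkOr (nf a) (nf b)
  | _ => f
  end.

Definition const_or_constant_free (f : form) : Prop :=
  f = Top \/ f = Bot \/ constant_free f.

#[local] Hint Constructors acu : core.

Lemma acu_mkAnd p q : acu (And p q) (mkAnd p q).
Proof. destruct p, q; simpl; auto. Qed.

Lemma acu_mkOr p q : acu (Or p q) (mkOr p q).
Proof. destruct p, q; simpl; auto. Qed.

Lemma vars_mkAnd p q : incl (vars (mkAnd p q)) (vars p ++ vars q).
Proof. intros x. destruct p, q; simpl; rewrite ?in_app_iff; tauto. Qed.

Lemma vars_mkOr p q : incl (vars (mkOr p q)) (vars p ++ vars q).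
Proof. intros x. destruct p, q; simpl; rewrite ?in_app_iff; tauto. Qed.

Lemma linear_mkAnd p q : linear (And p q) -> linear (mkAnd p q).
Proof. unfold linear. destruct p, q; simpl; rewrite ?app_nil_r; auto using NoDup_nil. Qed.

Lemma linear_mkOr p q : linear (Or p q) -> linear (mkOr p q).
Proof. unfold linear. destruct p, q; simpl; rewrite ?app_nil_r; auto using NoDup_nil. Qed.

Lemma shape_mkAnd p q :
  const_or_constant_free p -> const_or_constant_free q -> const_or_constant_free (mkAnd p q).
Proof.
  unfold const_or_constant_free. destruct p, q; simpl; intuition discriminate.
Qed.

Lemma shape_mkOr p q :
  const_or_constant_free p -> const_or_constant_free q -> const_or_constant_free (mkOr p q).
Proof. unfold const_or_constant_free. destruct p, q; simpl; intuition discriminate. Qed.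

Lemma acu_nf f : acu f (nf f).
Proof.
  induction f; simpl; auto.
  - eapply acu_trans; [apply acu_and; eassumption | apply acu_mkAnd].
  - eapply acu_trans; [apply acu_or; eassumption | apply acu_mkOr].
Qed.

Lemma eval_nf a f : eval a (nf f) = eval a f.
Proof. symmetry. apply acu_eval, acu_nf. Qed.

Lemma vars_nf f : incl (vars (nf f)) (vars f).
Proof.
  induction f; simpl; try apply incl_refl.
  - eapply incl_tran; [apply vars_mkAnd | apply incl_app_app; assumption].
  - eapply incl_tran; [apply vars_mkOr | apply incl_app_app; assumption].
Qed.

Lemma linear_nf f : linear f -> linear (nf f).
Proof.
  unfold linear. induction f; simpl; auto; intros L.
  - apply linear_mkAnd. exact (NoDup_app_incl _ _ _ _ L (IHf1 (NoDup_app_remove_r _ _ L))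
      (IHf2 (NoDup_app_remove_l _ _ L)) (vars_nf f1) (vars_nf f2)).
  - apply linear_mkOr. exact (NoDup_app_incl _ _ _ _ L (IHf1 (NoDup_app_remove_r _ _ L))
      (IHf2 (NoDup_app_remove_l _ _ L)) (vars_nf f1) (vars_nf f2)).
Qed.

Lemma shape_nf f : const_or_constant_free (nf f).
Proof.
  induction f; simpl; try (unfold const_or_constant_free; simpl; tauto).
  - apply shape_mkAnd; assumption.
  - apply shape_mkOr; assumption.
Qed.

Lemma constant_free_nf f : vars (nf f) <> [] -> constant_free (nf f).
Proof. destruct (shape_nf f) as [-> | [-> | H]]; simpl; tauto. Qed.

Lemma on_vars_nf f V : incl (vars f) V -> incl V (pvars (nf f)) -> on_vars (nf f) V.
Proof.
  intros I P x. split; intros X.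
  - exact (I x (vars_nf f x X)).
  - exact (pvars_incl_vars _ x (P x X)).
Qed.

Lemma negation_free_nf f V :
  linear f -> incl (vars f) V -> incl V (pvars (nf f)) -> negation_free (nf f).
Proof.
  intros L I P. apply negation_free_of_incl_pvars; [exact (linear_nf f L) |].
  exact (incl_tran (vars_nf f) (incl_tran I P)).
Qed.

Lemma on_vars_nonnil f V : on_vars f V -> V <> [] -> vars f <> [].
Proof.
  intros O Hne E. destruct V as [| x V]; [contradiction |].
  pose proof (proj2 (O x) (in_eq x V)) as X. rewrite E in X. contradiction.
Qed.

Lemma nontrivial_eval_ext phi psi phi' psi' :
  (forall a, eval a phi' = eval a phi) -> (forall a, eval a psi' = eval a psi) ->
  incl (inf_vars phi' psi') (inf_vars phi psi) ->
  nontrivial phi psi -> nontrivial phi' psi'.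
Proof.
  intros E1 E2 I NT x X T. exact (NT x (I x X) (trivial_at_eval_ext x _ _ _ _ E1 E2 T)).
Qed.

Lemma derivable_u_rule_acu phi psi phi' psi' :
  acu phi phi' -> acu psi' psi -> linear phi' -> linear psi' ->
  derivable_u (smr phi' psi') phi psi.
Proof.
  intros A1 A2 L1 L2. apply rt_step. left. exists phi', psi'.
  split; [exact A1 | split; [| exact A2]].
  rewrite <- (subst_Var phi'), <- (subst_Var psi').
  apply rewr_inst; rewrite ?subst_Var; [right; right; split; reflexivity | exact L1 | exact L2].
Qed.

Theorem proposition2p16 (phi psi : form) :
  linear_inference phi psi ->
  nontrivial phi psi ->
  inf_vars phi psi <> nil ->
  exists phi' psi' : form,
    constant_free phi' /\ constant_free psi' /\
    negation_free phi' /\ negation_free psi' /\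
    linear_inference phi' psi' /\ nontrivial phi' psi' /\
    on_vars phi' (inf_vars phi psi) /\ on_vars psi' (inf_vars phi psi) /\
    derivable_u (smr phi' psi') phi psi.
Proof.
  intros [Lphi [Lpsi Hval]] Hnt Hne.
  assert (Iphi : incl (vars phi) (inf_vars phi psi)) by apply incl_appl, incl_refl.
  assert (Ipsi : incl (vars psi) (inf_vars phi psi)) by apply incl_appr, incl_refl.
  assert (Pphi : incl (inf_vars phi psi) (pvars (nf phi)))
    by (intros x; apply (nontrivial_in_pvars_l phi psi); auto using eval_nf).
  assert (Ppsi : incl (inf_vars phi psi) (pvars (nf psi)))
    by (intros x; apply (nontrivial_in_pvars_r phi psi); auto using eval_nf).
  pose proof (on_vars_nf phi _ Iphi Pphi) as Ophi.
  pose proof (on_vars_nf psi _ Ipsi Ppsi) as Opsi.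
  pose proof (constant_free_nf phi (on_vars_nonnil _ _ Ophi Hne)).
  pose proof (constant_free_nf psi (on_vars_nonnil _ _ Opsi Hne)).
  pose proof (negation_free_nf phi _ Lphi Iphi Pphi).
  pose proof (negation_free_nf psi _ Lpsi Ipsi Ppsi).
  assert (linear_inference (nf phi) (nf psi)).
  { split; [| split]; [apply linear_nf; exact Lphi | apply linear_nf; exact Lpsi |].
    intros a. rewrite !eval_nf. apply Hval. }
  assert (nontrivial (nf phi) (nf psi)).
  { apply (nontrivial_eval_ext phi psi); [intro a; apply eval_nf .. | | exact Hnt].
    exact (incl_app_app (vars_nf phi) (vars_nf psi)). }
  pose proof (derivable_u_rule_acu _ _ _ _ (acu_nf phi) (acu_sym _ _ (acu_nf psi))
                (linear_nf _ Lphi) (linear_nf _ Lpsi)).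
  exists (nf phi), (nf psi). tauto.
Qed.
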